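(* Let $G$ be a bipartite cactus graph with $n\ge4$ vertices and $m$ edges, with degree sequence $d$, and suppose $\beta\ge 1$, where $\beta=\max\{\mu_1,\tfrac12(\mu_1+\mu_{odd})\}$. Then $m\le \left\lfloor\frac{4(n-1)-\beta}{3}\right\rfloor$.
   Context: A cactus graph is a connected simple graph in which every edge belongs to at most one cycle; a bi-cactus is a bipartite cactus. For the degree sequence $d$, $\mu_1$ is the number of entries equal to $1$ and $\mu_{odd}$ is the number of entries that are odd integers greater than $1$. *)

From mathcomp Require Import all_boot all_order all_algebra.
Set Implicit Arguments. Unset Strict Implicit. Unset Printing Implicit Defensive.
Import Order.TTheory GRing.Theory Num.Theory.

Definition simple_graph (T : finType) (e : rel T) : Prop :=
  symmetric e /\ irreflexive e.

Definition connected_graph (T : finType) (e : rel T) : Prop :=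
  forall x y : T, connect e x y.

Definition bipartite (T : finType) (e : rel T) : Prop :=
  exists c : T -> bool, forall x y, e x y -> c x != c y.

Definition is_graph_cycle (T : finType) (e : rel T) (c : seq T) : bool :=
  [&& 3 <= size c, uniq c & cycle e c].

Definition cycle_edge (T : finType) (c : seq T) (x y : T) : bool :=
  [&& x \in c, y \in c & (next c x == y) || (next c y == x)].

Definition same_cycle (T : finType) (c1 c2 : seq T) : Prop :=
  forall x y, cycle_edge c1 x y = cycle_edge c2 x y.

Definition cactus (T : finType) (e : rel T) : Prop :=
  [/\ simple_graph e, connected_graph e &
   forall (c1 c2 : seq T) (x y : T),
     is_graph_cycle e c1 -> is_graph_cycle e c2 -> e x y ->
     cycle_edge c1 x y -> cycle_edge c2 x y -> same_cycle c1 c2].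

Definition bi_cactus (T : finType) (e : rel T) : Prop :=
  cactus e /\ bipartite e.

Definition deg (T : finType) (e : rel T) (x : T) : nat := #|[set y | e x y]|.

Definition num_edges (T : finType) (e : rel T) : nat :=
  #|[set [set p.1; p.2] | p in [set p : T * T | e p.1 p.2]]|.

Definition mu1 (T : finType) (e : rel T) : nat := #|[set x | deg e x == 1%N]|.

Definition muodd (T : finType) (e : rel T) : nat :=
  #|[set x | odd (deg e x) && (1 < deg e x)%N]|.

Local Open Scope ring_scope.

Definition beta (T : finType) (e : rel T) : rat :=
  Num.max ((mu1 e)%:R) (((mu1 e + muodd e)%N)%:R / 2).

(* Split the m edges into b bridges and c edges lying on a cycle.  Deleting
   one edge of a cycle keeps a connected bipartite cactus, and by the cactus
   property it removes from the cycle-edges the whole cycle, which has at least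
   4 edges because bipartite cycles are even; induction down to a tree, which
   has at most n - 1 edges, gives 4m <= 4(n - 1) + c, i.e. 3m + b <= 4(n - 1).
   It remains to see beta <= b.  Leaf edges are distinct bridges when n >= 3,
   so mu1 <= b.  The cycle-edges at a vertex pair up along the cycles through
   it, so every vertex of odd degree is the tail of a bridge arc, whence
   mu1 + muodd <= 2b. *)

From mathcomp Require Import all_boot all_order all_algebra.
From mathcomp Require Import zify lra.
Import Order.TTheory GRing.Theory Num.Theory.
Set Implicit Arguments. Unset Strict Implicit. Unset Printing Implicit Defensive.

Section SeqCycles.
Variable T : finType.
Implicit Types (D p : seq T) (x y z v : T).

Lemma eq_set2 (a b c d : T) : [set a; b] = [set c; d] ->
  (a = c /\ b = d) \/ (a = d /\ b = c).
Proof.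
move=> h.
have : a \in [set c; d] by rewrite -h set21.
have : b \in [set c; d] by rewrite -h set22.
have : c \in [set a; b] by rewrite h set21.
have : d \in [set a; b] by rewrite h set22.
rewrite !inE => + + /orP[] /eqP hb /orP[] /eqP ha; subst.
all: by move=> /orP[]/eqP? /orP[]/eqP?; subst; auto.
Qed.

Lemma prev_head x p : x \notin p -> prev (x :: p) x = last x p.
Proof.
move=> xp; rewrite prev_nth mem_head memNindex //.
by rewrite -[in RHS](last_cons x x p) -nth_last.
Qed.

Lemma next_neq_prev D x :
  uniq D -> 3 <= size D -> x \in D -> next D x != prev D x.
Proof.
move=> U sD /rot_to [i p Dp].
rewrite -(next_rot i U) -(prev_rot i U) Dp.
have : uniq (x :: p) by rewrite -Dp rot_uniq.
have : 2 <= size p by rewrite -ltnS -[(size p).+1]/(size (x :: p)) -Dp size_rot.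
case: p {Dp} => [|a [|b q]] // _ /andP [xp /andP [aq _]].
rewrite (prev_head xp) [next _ _]/= eqxx.
by apply/eqP => ab; move: aq; rewrite ab /= mem_last.
Qed.

Lemma cycle_edgeC D x y : cycle_edge D x y = cycle_edge D y x.
Proof. by rewrite /cycle_edge andbCA orbC. Qed.

Lemma cycle_edge_next D x : x \in D -> cycle_edge D x (next D x).
Proof. by move=> xD; rewrite /cycle_edge xD mem_next xD eqxx. Qed.

Lemma cycle_edgeE D v z : uniq D ->
  cycle_edge D v z = (v \in D) && ((z == next D v) || (z == prev D v)).
Proof.
move=> U; case vD: (v \in D); last by rewrite /cycle_edge vD.
have E : (next D z == v) = (z == prev D v).
  by apply/eqP/eqP => [<-|->]; rewrite ?prev_next ?next_prev.
rewrite /cycle_edge vD E [next D v == z]eq_sym /=.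
case: (boolP (z == next D v)) => [/eqP->|_]; first by rewrite mem_next vD.
by case: (boolP (z == prev D v)) => [/eqP->|_]; rewrite ?mem_prev ?vD ?andbF.
Qed.

Lemma cycle_edge_rel (e : rel T) D x y : symmetric e -> cycle e D ->
  cycle_edge D x y -> e x y.
Proof.
move=> se cD /and3P [xD yD /orP [/eqP <-|/eqP <-]]; first exact: next_cycle.
by rewrite se; apply: next_cycle.
Qed.

Definition cycle_edge_set D : {set {set T}} := [set [set x; next D x] | x in D].

Lemma card_cycle_edge_set D : uniq D -> 3 <= size D -> #|cycle_edge_set D| = size D.
Proof.
move=> U sD; rewrite card_in_imset ?cardsE ?(card_uniqP U) //.
move=> x y xD yD /eq_set2 [[-> //]|[h1 h2]].
have := next_neq_prev U sD yD.
by rewrite -h1 -h2 (prev_next U) eqxx.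
Qed.

Definition other_neighbour D v x := if next D v == x then prev D v else next D v.

Lemma cycle_edge_other_neighbour D v x :
  uniq D -> v \in D -> cycle_edge D v (other_neighbour D v x).
Proof.
by move=> U vD; rewrite cycle_edgeE // vD /other_neighbour; case: ifP; rewrite eqxx ?orbT.
Qed.

Lemma other_neighbour_neq D v x :
  uniq D -> 3 <= size D -> v \in D -> other_neighbour D v x != x.
Proof.
move=> U sD vD; rewrite /other_neighbour; case: ifP => [/eqP <-|/negbT //].
by rewrite eq_sym next_neq_prev.
Qed.

Lemma other_neighbourE D v x y : uniq D ->
  cycle_edge D v x -> cycle_edge D v y -> x != y -> other_neighbour D v y = x.
Proof.
rewrite /other_neighbour => U; rewrite !cycle_edgeE // => /andP[_ hx] /andP[_ hy] xy.
case: ifP => [/eqP ny|/negbT ny].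
  by case/orP: hx => /eqP // hx; move: xy; rewrite hx ny eqxx.
case/orP: hx => /eqP // hx; case/orP: hy => /eqP hy; first by move: ny; rewrite hy eqxx.
by move: xy; rewrite hx hy eqxx.
Qed.

Lemma bipartite_cycle_even (e : rel T) (col : T -> bool) D :
  (forall x y, e x y -> col x != col y) -> uniq D -> cycle e D -> ~~ odd (size D).
Proof.
move=> proper U cD.
have col_next x : x \in D -> col (next D x) = ~~ col x.
  by move=> xD; have := proper _ _ (next_cycle cD xD); case: (col x); case: (col _).
have next_inj : injective (next D) := can_inj (prev_next U).
have le_class b : #|[set x in D | col x == b]| <= #|[set x in D | col x == ~~ b]|.
  rewrite -(card_imset _ next_inj); apply/subset_leq_card/subsetP => z.
  case/imsetP => x /[!inE] /andP [xD /eqP cx] ->.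
  by rewrite mem_next xD col_next ?cx ?eqxx.
have -> : size D = #|[set x in D] :&: [set x | col x]| + #|[set x in D] :\: [set x | col x]|.
  by rewrite cardsID cardsE; apply/esym/card_uniqP.
have <- : [set x in D | col x == true] = [set x in D] :&: [set x | col x].
  by apply/setP => x; rewrite !inE eqb_id.
have <- : [set x in D | col x == false] = [set x in D] :\: [set x | col x].
  by apply/setP => x; rewrite !inE eqbF_neg andbC.
have /anti_leq-> : #|[set x in D | col x == true]| <= #|[set x in D | col x == false]|
  <= #|[set x in D | col x == true]| by rewrite !le_class.
by rewrite addnn odd_double.
Qed.

End SeqCycles.

Section EdgesOnCycles.
Variable T : finType.
Implicit Types (e R : rel T) (D p : seq T) (x y : T).

Definition edge_set R : {set {set T}} :=
  [set [set p.1; p.2] | p in [set p : T * T | R p.1 p.2]].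

Lemma num_edgesE e : num_edges e = #|edge_set e|.
Proof. by []. Qed.

Definition del_edge e x y : rel T := [rel a b | e a b && ([set a; b] != [set x; y])].

(* The edge [xy] lies on a cycle iff its ends stay connected without it. *)
Definition on_cycle e x y : bool := e x y && connect (del_edge e x y) x y.

Definition bridge e : rel T := [rel x y | e x y && ~~ on_cycle e x y].

Definition unique_edge_cycles e : Prop := forall (c1 c2 : seq T) x y,
  is_graph_cycle e c1 -> is_graph_cycle e c2 -> e x y ->
  cycle_edge c1 x y -> cycle_edge c2 x y -> same_cycle c1 c2.

Lemma del_edge_sub e x y : subrel (del_edge e x y) e.
Proof. by move=> a b /andP []. Qed.

Lemma del_edge_sym e x y : symmetric e -> symmetric (del_edge e x y).
Proof. by move=> se a b; rewrite /del_edge /= se setUC. Qed.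

Lemma del_edgeC e x y : del_edge e x y =2 del_edge e y x.
Proof. by move=> a b; rewrite /del_edge /= [[set y; x]]setUC. Qed.

Lemma on_cycle_sub e : subrel (on_cycle e) e.
Proof. by move=> a b /andP []. Qed.

Lemma on_cycle_sym e : symmetric e -> symmetric (on_cycle e).
Proof.
move=> se x y; rewrite /on_cycle se (eq_connect (del_edgeC e x y)).
by rewrite (sym_connect_sym (del_edge_sym y x se)).
Qed.

Lemma bridge_sub e : subrel (bridge e) e.
Proof. by move=> a b /andP []. Qed.

Lemma bridge_sym e : symmetric e -> symmetric (bridge e).
Proof. by move=> se a b; rewrite /bridge /= se on_cycle_sym. Qed.

Lemma graph_cycle_sub e e' D : subrel e e' -> is_graph_cycle e D -> is_graph_cycle e' D.
Proof. by move=> s /and3P [h1 h2 h3]; rewrite /is_graph_cycle h1 h2 (sub_cycle s h3). Qed.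

Lemma unique_edge_cycles_sub e e' : subrel e' e ->
  unique_edge_cycles e -> unique_edge_cycles e'.
Proof.
by move=> s ue c1 c2 x y /(graph_cycle_sub s) ? /(graph_cycle_sub s) ? /s; apply: ue.
Qed.

Lemma on_cycle_graph_cycle e x y : symmetric e -> irreflexive e ->
  on_cycle e x y -> exists2 D, is_graph_cycle e D & cycle_edge D x y.
Proof.
move=> se ie /andP [exy /connectP [p pp yl]].
case: (shortenP pp) yl => p' pp' U _ yl.
have pe : path e x p' by apply: sub_path pp'; apply: del_edge_sub.
exists (x :: p'); last first.
  have xp : x \notin p' by case/andP: U.
  by rewrite cycle_edgeE // mem_head (prev_head xp) yl eqxx orbT.
rewrite /is_graph_cycle U /= rcons_path pe -yl se exy andbT.
case: p' pp' {pe U} yl => [|z [|w q]] //=; first by move=> _ yx; rewrite yx ie in exy.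
by case/andP => /andP [_ /negP yz _] zy; case: yz; rewrite zy.
Qed.

Lemma connect_del_edge_avoid e x y a p :
  path e a p -> x \notin a :: p -> connect (del_edge e x y) a (last a p).
Proof.
move=> pp xp; apply/connectP; exists p => //.
apply: (sub_in_path (P := predC1 x) _ _ pp).
- move=> u w /[!inE] ux wx euw; rewrite /del_edge /= euw; apply/eqP => h.
  have /set2P[] : x \in [set u; w] by rewrite h set21.
    by move=> xu; rewrite xu eqxx in ux.
  by move=> xw; rewrite xw eqxx in wx.
- by apply/allP => z zp /=; apply/eqP => zx; rewrite -zx zp in xp.
Qed.

Lemma graph_cycle_on_cycle e D x y :
  symmetric e -> is_graph_cycle e D -> cycle_edge D x y -> on_cycle e x y.
Proof.
move=> se /and3P [sD U cD].
wlog -> : x y / y = next D x.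
  move=> W; rewrite cycle_edgeE // => /andP [xD /orP [/eqP|/eqP]] ->.
    by apply: W => //; apply: cycle_edge_next.
  rewrite on_cycle_sym //; apply: W; first by rewrite next_prev.
  by rewrite -{2}(next_prev U x); apply: cycle_edge_next; rewrite mem_prev.
case/and3P => xD _ _; case/rot_to: xD => i p Dp.
have U' : uniq (x :: p) by rewrite -Dp rot_uniq.
have c' : cycle e (x :: p) by rewrite -Dp rot_cycle.
have : 2 <= size p by rewrite -ltnS -[(size p).+1]/(size (x :: p)) -Dp size_rot.
rewrite -(next_rot i U) Dp; case: p {Dp} U' c' => [|a [|b q]] // U' c' _.
rewrite [next _ _]/= eqxx /on_cycle.
have [exa] : e x a /\ path e a (rcons (b :: q) x) by apply/andP.
rewrite rcons_path exa (sym_connect_sym (del_edge_sym x a se)) => /andP [pbq eqx].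
move: U' => /= /andP [xabq /andP [abq _]].
(* The rest of the cycle leads from [a] back to [x] without the edge [xa]. *)
apply: (connect_trans (connect_del_edge_avoid a pbq xabq)).
apply: connect1; rewrite /del_edge /= eqx; apply/eqP => /eq_set2 [[lx _]|[la _]].
  by move: xabq; rewrite inE negb_or -lx mem_last andbF.
by move: abq; rewrite -la mem_last.
Qed.

End EdgesOnCycles.

Section BipartiteCounting.
Variables (T : finType) (e : rel T) (col : T -> bool).
Hypothesis proper : forall x y, e x y -> col x != col y.

Lemma card_edge_set_arcs (R : rel T) (c : bool) : symmetric R -> subrel R e ->
  #|edge_set R| = #|[set p : T * T | R p.1 p.2 && (col p.1 == c)]|.
Proof.
move=> sR sub.
have -> : edge_set R =
    [set [set p.1; p.2] | p in [set p : T * T | R p.1 p.2 && (col p.1 == c)]].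
  apply/setP => s; apply/imsetP/imsetP => [[[a b]]|[[a b]]]; rewrite inE /=; last first.
    by case/andP => Rab _ ->; exists (a, b); rewrite ?inE.
  move=> Rab ->; case ca: (col a == c); first by exists (a, b); rewrite // inE /= Rab ca.
  exists (b, a); last by rewrite /= setUC.
  rewrite inE /= sR Rab /=; have := proper (sub _ _ Rab).
  by move: ca; case: (col a); case: (col b); case: c.
rewrite card_in_imset // => [[a b] [a' b']]; rewrite !inE /=.
move=> /andP [Rab /eqP ca] /andP [Rab' /eqP ca'] /eq_set2 [[-> ->] //|[aa' _]].
by have := proper (sub _ _ Rab'); rewrite -aa' ca ca' eqxx.
Qed.

Lemma card_arcs (R : rel T) : symmetric R -> subrel R e ->
  #|[set p : T * T | R p.1 p.2]| = 2 * #|edge_set R|.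
Proof.
move=> sR sub; rewrite -(cardsID [set p : T * T | col p.1]) mul2n -addnn.
rewrite {1}(card_edge_set_arcs true sR sub) (card_edge_set_arcs false sR sub).
by congr (_ + _); apply: eq_card => p; rewrite !inE ?eqb_id ?eqbF_neg // andbC.
Qed.

Lemma card_edge_set_split : symmetric e ->
  #|edge_set e| = #|edge_set (bridge e)| + #|edge_set (on_cycle e)|.
Proof.
move=> se.
rewrite (card_edge_set_arcs true se (fun _ _ h => h)).
rewrite (card_edge_set_arcs true (bridge_sym se) (@bridge_sub _ e)).
rewrite (card_edge_set_arcs true (on_cycle_sym se) (@on_cycle_sub _ e)).
rewrite -(cardsID [set p : T * T | on_cycle e p.1 p.2]) addnC.
congr (_ + _); apply: eq_card => [[a b]]; rewrite !inE /bridge /=.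
  by case: (on_cycle e a b); rewrite ?andbF ?andbT.
by case: (boolP (on_cycle e a b)) => h; rewrite ?andbF ?andbT //= (on_cycle_sub h).
Qed.

End BipartiteCounting.

Section BreadthFirstLayers.
Variables (T : finType) (e : rel T) (r : T).
Hypotheses (se : symmetric e) (conn : forall x y, connect e x y).

Definition layer k : {set T} :=
  iter k (fun S : {set T} => S :|: [set y | [exists x in S, e x y]]) [set r].

Lemma layerS k : layer k.+1 = layer k :|: [set y | [exists x in layer k, e x y]].
Proof. by []. Qed.

Lemma layer_exists x : exists k, x \in layer k.
Proof.
have /connectP [p pp ->] := conn r x.
elim/last_ind: p pp => [|p y IH]; first by exists 0; rewrite /= set11.
rewrite rcons_path => /andP [/IH [k hk] ey]; exists k.+1.
rewrite last_rcons layerS !inE; apply/orP; right.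
by apply/existsP; exists (last r p); rewrite hk.
Qed.

Definition dist x : nat := ex_minn (layer_exists x).

Lemma dist_layer x : x \in layer (dist x).
Proof. by rewrite /dist; case: ex_minnP. Qed.

Lemma dist_min x k : x \in layer k -> dist x <= k.
Proof. by rewrite /dist; case: ex_minnP => m _; apply. Qed.

Lemma dist_root : dist r = 0.
Proof. by apply/eqP; rewrite -leqn0 dist_min //= set11. Qed.

Lemma dist0 x : dist x = 0 -> x = r.
Proof. by move=> h; have := dist_layer x; rewrite h /= => /set1P. Qed.

Lemma dist_edge x y : e x y -> dist y <= (dist x).+1.
Proof.
move=> exy; apply: dist_min; rewrite layerS !inE; apply/orP; right.
by apply/existsP; exists x; rewrite dist_layer exy.
Qed.

Lemma dist_parent x k : dist x = k.+1 -> exists2 y, e y x & dist y = k.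
Proof.
move=> dx; have := dist_layer x; rewrite dx layerS !inE => /orP [/dist_min|].
  by rewrite dx ltnn.
case/existsP => y /andP [yk eyx]; exists y => //.
by apply/eqP; rewrite eqn_leq dist_min //= -ltnS -dx dist_edge.
Qed.

Lemma connect_del_edge_root x y z :
  dist z < dist x -> connect (del_edge e x y) z r.
Proof.
move: {2}(dist z) (erefl (dist z)) => k; elim: k z => [|k IH] z dz lt.
  by rewrite (dist0 dz).
have [w ewz dw] := dist_parent dz.
have wr : connect (del_edge e x y) w r by apply: IH => //; apply: ltn_trans lt; rewrite dw dz.
apply: connect_trans wr.
apply: connect1; rewrite /del_edge /= se ewz; apply/eqP => h.
have /set2P[] : x \in [set z; w] by rewrite h set21.
  by move=> xz; rewrite xz ltnn in lt.
by move=> xw; rewrite xw dw dz ltnNge leqnSn in lt.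
Qed.

Lemma on_cycle_same_dist x y : e x y -> dist x = dist y -> on_cycle e x y.
Proof.
move=> exy dxy; rewrite /on_cycle exy.
have [-> | xy] := eqVneq x y; first exact: connect0.
case dx: (dist x) => [|k].
  by move: xy; rewrite (dist0 dx) (dist0 (etrans (esym dxy) dx)) eqxx.
have to_root u : dist u = k.+1 -> connect (del_edge e x y) u r.
  move=> du; have [w ewu dw] := dist_parent du.
  apply: connect_trans (connect_del_edge_root y (_ : dist w < dist x)); last by rewrite dw dx.
  apply: connect1; rewrite /del_edge /= se ewu; apply/eqP => /eq_set2 h.
  have : dist w = k.+1 by case: h => [[_ ->]|[_ ->]]; rewrite -?dxy.
  by rewrite dw; lia.
apply: connect_trans (to_root x dx) _.
by rewrite (sym_connect_sym (del_edge_sym x y se)); apply: to_root; rewrite -dxy.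
Qed.

Lemma on_cycle_two_parents x y1 y2 : e y1 x -> e y2 x ->
  dist x = (dist y1).+1 -> dist x = (dist y2).+1 -> y1 != y2 -> on_cycle e x y1.
Proof.
move=> e1 e2 d1 d2 y12; rewrite /on_cycle se e1.
apply: (@connect_trans _ _ y2).
  apply: connect1; rewrite /del_edge /= se e2; apply/eqP => /eq_set2 [[_ y21]|[xy1 _]].
    by rewrite y21 eqxx in y12.
  by move: d1; rewrite xy1; lia.
apply: connect_trans (connect_del_edge_root y1 (_ : dist y2 < dist x)) _; first by rewrite d2.
by rewrite (sym_connect_sym (del_edge_sym x y1 se)); apply: connect_del_edge_root; rewrite d1.
Qed.

(* Send each edge to its end farther from [r]; two edges with the same image
   would close a cycle through [r]. *)
Lemma card_edge_set_acyclic : (forall x y, ~~ on_cycle e x y) -> #|edge_set e| <= #|T|.-1.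
Proof.
move=> acyc.
have edge_dist x y : e x y -> dist y = (dist x).+1 \/ dist x = (dist y).+1.
  move=> exy; have h1 := dist_edge exy.
  have h2 : dist x <= (dist y).+1 by apply: dist_edge; rewrite se.
  have [dxy|] := eqVneq (dist x) (dist y); last by lia.
  by have := acyc x y; rewrite on_cycle_same_dist.
pose parent x := odflt x [pick y | e y x && (dist x == (dist y).+1)].
have parentE x y : e y x -> dist x = (dist y).+1 -> parent x = y.
  move=> eyx dx; rewrite /parent; case: pickP => [z /andP [ezx /eqP dz]|/(_ y)] /=.
    have [// | zy] := eqVneq z y.
    by have := acyc x z; rewrite (on_cycle_two_parents ezx eyx dz dx zy).
  by rewrite eyx dx eqxx.
have sub : edge_set e \subset [set [set x; parent x] | x in [set~ r]].
  apply/subsetP => s /imsetP [[a b]]; rewrite inE /= => eab ->.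
  wlog dab : a b eab / dist b = (dist a).+1.
    move=> W; case: (edge_dist a b eab) => h; first exact: W.
    by rewrite setUC; apply: W; rewrite // se.
  apply/imsetP; exists b; last by rewrite (parentE b a) // setUC.
  by rewrite in_setC1; apply/eqP => br; move: dab; rewrite br dist_root.
apply: (leq_trans (subset_leq_card sub)); apply: (leq_trans (leq_imset_card _ _)).
by rewrite cardsC1.
Qed.

End BreadthFirstLayers.

Section DeleteCycleEdge.
Variables (T : finType) (e : rel T) (x y : T).
Hypotheses (se : symmetric e) (exy : e x y).

Lemma edge_set_del_edge : edge_set (del_edge e x y) = edge_set e :\ [set x; y].
Proof.
apply/setP => s; rewrite in_setD1; apply/imsetP/andP.
  case=> [[a b]]; rewrite inE /= => /andP [eab ne] ->; split => //.
  by apply/imsetP; exists (a, b); rewrite ?inE.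
case=> ne /imsetP [[a b]]; rewrite inE /= => eab sab; exists (a, b) => //.
by rewrite inE /= /del_edge /= eab -sab ne.
Qed.

Lemma mem_edge_set : [set x; y] \in edge_set e.
Proof. by apply/imsetP; exists (x, y); rewrite ?inE. Qed.

Lemma card_edge_set_gt0 : 0 < #|edge_set e|.
Proof. by apply/card_gt0P; exists [set x; y]; apply: mem_edge_set. Qed.

Lemma card_edge_set_del_edge : #|edge_set (del_edge e x y)| = #|edge_set e| - 1.
Proof.
by rewrite edge_set_del_edge [#|edge_set e|](cardsD1 [set x; y]) mem_edge_set add1n subn1.
Qed.

Lemma connect_del_on_cycle a b : on_cycle e x y -> connect e a b ->
  connect (del_edge e x y) a b.
Proof.
move=> /andP [_ cxy] cab; apply: connect_sub cab => u w euw.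
have [/eq_set2 [[-> ->]|[-> ->]] // | ne] := eqVneq [set u; w] [set x; y].
  by rewrite (sym_connect_sym (del_edge_sym x y se)).
by apply: connect1; rewrite /del_edge /= euw ne.
Qed.

Lemma on_cycle_del_edge_sub D : irreflexive e -> unique_edge_cycles e ->
  is_graph_cycle e D -> cycle_edge D x y ->
  edge_set (on_cycle (del_edge e x y)) \subset edge_set (on_cycle e) :\: cycle_edge_set D.
Proof.
move=> ie ue gD Dxy; have sub := @del_edge_sub _ e x y.
apply/subsetP => s /imsetP [[a b]]; rewrite inE /= => oab ->; rewrite inE; apply/andP; split.
  (* A cycle of the smaller graph through an edge of [D] would be [D] itself,
     which uses the deleted edge. *)
  apply/negP => /imsetP [z zD hz].
  have ie' : irreflexive (del_edge e x y) by move=> w; apply/negP => /sub; rewrite ie.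
  have [D' gD' D'ab] := on_cycle_graph_cycle (del_edge_sym x y se) ie' oab.
  have Dab : cycle_edge D a b.
    by case/eq_set2: hz => [[-> ->]|[-> ->]]; last rewrite cycle_edgeC; apply: cycle_edge_next.
  have same := ue _ _ _ _ gD (graph_cycle_sub sub gD') (sub _ _ (on_cycle_sub oab)) Dab D'ab.
  have D'xy : cycle_edge D' x y by rewrite -same.
  have cD' : cycle (del_edge e x y) D' by case/and3P: gD'.
  have := cycle_edge_rel (del_edge_sym x y se) cD' D'xy.
  by rewrite /del_edge /= eqxx andbF.
apply/imsetP; exists (a, b) => //; rewrite inE /=.
case/andP: oab => eab cab; rewrite /on_cycle (sub _ _ eab) /=.
apply: connect_sub cab => u w h; apply: connect1.
by move: h; rewrite /del_edge /= => /andP [/sub -> ->].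
Qed.

End DeleteCycleEdge.

Lemma cycle_edge_set_sub (T : finType) (e : rel T) D : symmetric e ->
  is_graph_cycle e D -> cycle_edge_set D \subset edge_set (on_cycle e).
Proof.
move=> se gD; apply/subsetP => s /imsetP [z zD ->]; apply/imsetP.
by exists (z, next D z); rewrite // inE /= (graph_cycle_on_cycle se gD) ?cycle_edge_next.
Qed.

Lemma bipartite_graph_cycle_size (T : finType) (e : rel T) (col : T -> bool) D :
  (forall x y, e x y -> col x != col y) -> is_graph_cycle e D -> 4 <= size D.
Proof.
move=> proper /and3P [sD U cD]; move: sD (bipartite_cycle_even proper U cD).
by case: (size D) => [|[|[|[|k]]]].
Qed.

Lemma del_cycle_edge_weight (T : finType) (col : T -> bool) (e : rel T) x y :
  symmetric e -> (forall x y, e x y -> col x != col y) ->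
  unique_edge_cycles e -> on_cycle e x y ->
  4 * #|edge_set e| + #|edge_set (on_cycle (del_edge e x y))| <=
  4 * #|edge_set (del_edge e x y)| + #|edge_set (on_cycle e)|.
Proof.
move=> se proper ue oxy.
have ie : irreflexive e by move=> z; apply/negP => /proper; rewrite eqxx.
have [D gD Dxy] := on_cycle_graph_cycle se ie oxy.
have exy := on_cycle_sub oxy.
have := card_edge_set_gt0 exy.
have := subset_leq_card (on_cycle_del_edge_sub se ie ue gD Dxy).
rewrite cardsD (setIidPr (cycle_edge_set_sub se gD)) card_edge_set_del_edge //.
have := subset_leq_card (cycle_edge_set_sub se gD).
have : 4 <= #|cycle_edge_set D|.
  case/and3P: (gD) => sD U _; rewrite card_cycle_edge_set //.
  exact: bipartite_graph_cycle_size proper gD.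
lia.
Qed.

Lemma bipartite_cactus_edge_bound (T : finType) (col : T -> bool) (r : T) (e : rel T) :
  symmetric e -> (forall x y, e x y -> col x != col y) ->
  unique_edge_cycles e -> (forall x y, connect e x y) ->
  4 * #|edge_set e| <= 4 * #|T|.-1 + #|edge_set (on_cycle e)|.
Proof.
have [m] := ubnP #|edge_set e|; elim: m e => // m IH e lt_m se proper ue conn.
case: (pickP [pred p : T * T | on_cycle e p.1 p.2]) => [[x y] /= oxy | acyclic]; last first.
  have tree := card_edge_set_acyclic r se conn (fun x y => negbT (acyclic (x, y))).
  by apply: leq_trans (leq_addr _ _); rewrite leq_pmul2l.
have exy := on_cycle_sub oxy; have sub := @del_edge_sub _ e x y.
have IH_del : 4 * #|edge_set (del_edge e x y)| <=
    4 * #|T|.-1 + #|edge_set (on_cycle (del_edge e x y))|.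
  apply: IH (del_edge_sym x y se) _ (unique_edge_cycles_sub sub ue) _.
  - by have := card_edge_set_gt0 exy; rewrite card_edge_set_del_edge //; lia.
  - by move=> a b /sub; apply: proper.
  - by move=> a b; exact: (connect_del_on_cycle se oxy (conn a b)).
rewrite -(leq_add2r #|edge_set (on_cycle (del_edge e x y))|).
apply: leq_trans (del_cycle_edge_weight se proper ue oxy) _.
by rewrite addnAC leq_add2r.
Qed.

Lemma even_card_involution (T : finType) (f : T -> T) (S : {set T}) :
  {in S, forall x, [/\ f x \in S, f x != x & f (f x) = x]} -> ~~ odd #|S|.
Proof.
have [n] := ubnP #|S|; elim: n S => // n IH S ltS inv.
have [-> | [x xS]] := set_0Vmem S; first by rewrite cards0.
have [fxS fxx ffx] := inv x xS.
have cardS : #|S| = #|S :\ x :\ f x|.+2.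
  by rewrite (cardsD1 x S) xS (cardsD1 (f x) (S :\ x)) !inE fxx fxS.
rewrite cardS /= negbK; apply: IH; first by rewrite -ltnS -cardS ltnW.
move=> y /[!inE] /and3P [yfx yx yS]; have [fyS fyy ffy] := inv y yS.
rewrite fyS fyy andbT; split=> //; apply/andP; split.
  by apply: contra yx => /eqP h; rewrite -ffy h ffx.
by apply: contra yfx => /eqP h; rewrite -ffy h.
Qed.

(* The cycle-edges at [v] pair up: each is matched with the other edge at [v]
   of the unique cycle through it. *)
Lemma on_cycle_deg_even (T : finType) (e : rel T) v :
  symmetric e -> irreflexive e -> unique_edge_cycles e ->
  ~~ odd #|[set x | on_cycle e v x]|.
Proof.
move=> se ie ue; set S := [set x | on_cycle e v x].
have cycle_at x : exists D, x \in S -> is_graph_cycle e D /\ cycle_edge D v x.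
  case: (boolP (x \in S)) => [|_]; last by exists [::].
  by rewrite inE => /(on_cycle_graph_cycle se ie) [D gD Dvx]; exists D.
have [Dx DxP] := fin_all_exists cycle_at.
apply: (even_card_involution (f := fun x => other_neighbour (Dx x) v x)) => x xS.
have [gD Dvx] := DxP x xS; case/and3P: (gD) => sD U cD.
have vD : v \in Dx x by case/and3P: Dvx.
set y := other_neighbour (Dx x) v x.
have Dvy : cycle_edge (Dx x) v y := cycle_edge_other_neighbour x U vD.
have yS : y \in S by rewrite inE (graph_cycle_on_cycle se gD Dvy).
have yx : y != x := other_neighbour_neq x U sD vD.
split=> //; have [gD' Dvy'] := DxP y yS; case/and3P: (gD') => _ U' _.
have same := ue _ _ _ _ gD gD' (cycle_edge_rel se cD Dvy) Dvy Dvy'.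
by apply: other_neighbourE U' _ Dvy' _; rewrite -?same // eq_sym.
Qed.

Lemma odd_deg_bridge (T : finType) (e : rel T) x :
  symmetric e -> irreflexive e -> unique_edge_cycles e ->
  odd (deg e x) -> exists y, bridge e x y.
Proof.
move=> se ie ue; case: (pickP (bridge e x)) => [y bxy _|nb]; first by exists y.
have -> : deg e x = #|[set y | on_cycle e x y]|.
  apply: eq_card => y; rewrite !inE; apply/idP/idP => [exy|/on_cycle_sub //].
  by have := nb y; rewrite /bridge /= exy => /negbFE.
by rewrite (negbTE (on_cycle_deg_even x se ie ue)).
Qed.

Lemma mu1_add_muodd (T : finType) (e : rel T) :
  mu1 e + muodd e = #|[set x | odd (deg e x)]|.
Proof.
rewrite /mu1 /muodd -(cardsID [set x | deg e x == 1] [set x | odd (deg e x)]).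
congr (_ + _); apply: eq_card => x; rewrite !inE; case: (deg e x) => [|[|k]] //=.
all: by case: (odd k).
Qed.

Lemma card_odd_deg_le_bridges (T : finType) (e : rel T) (col : T -> bool) :
  symmetric e -> (forall x y, e x y -> col x != col y) -> unique_edge_cycles e ->
  #|[set x | odd (deg e x)]| <= 2 * #|edge_set (bridge e)|.
Proof.
move=> se proper ue.
have ie : irreflexive e by move=> z; apply/negP => /proper; rewrite eqxx.
rewrite -(card_arcs proper (bridge_sym se) (@bridge_sub _ e)).
pose bn x := odflt x [pick y | bridge e x y].
rewrite -(card_in_imset (f := fun x => (x, bn x))); last by move=> ? ? _ _ [].
apply/subset_leq_card/subsetP => _ /imsetP [x /[!inE] ox ->]; rewrite /bn /=.
case: pickP => // none; have [y] := odd_deg_bridge se ie ue ox.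
by rewrite none.
Qed.

Lemma deg1_adj (T : finType) (e : rel T) x y z :
  deg e x == 1 -> e x y -> e x z = (z == y).
Proof.
move=> /cards1P [w Nx] exy; have : y \in [set y | e x y] by rewrite inE.
by rewrite Nx in_set1 => /eqP yw; rewrite -in_set1 yw -Nx inE.
Qed.

Lemma leaf_edge_not_on_cycle (T : finType) (e : rel T) x y :
  irreflexive e -> deg e x == 1 -> e x y -> ~~ on_cycle e x y.
Proof.
move=> ie lx exy; apply/negP => /andP [_ /connectP [[|z p] /= pth yl]].
  by rewrite -yl ie in exy.
case/andP: pth => /andP [exz]; rewrite (deg1_adj z lx exy) in exz.
by rewrite (eqP exz) eqxx.
Qed.

Lemma adjacent_leaves_card (T : finType) (e : rel T) x y :
  symmetric e -> (forall a b, connect e a b) ->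
  deg e x == 1 -> deg e y == 1 -> e x y -> #|T| <= 2.
Proof.
move=> se conn lx ly exy; have eyx : e y x by rewrite se.
have closed_xy : closed e [set x; y].
  apply: intro_closed; first exact: sym_connect_sym.
  move=> a b eab /set2P [] ea; subst a.
    by rewrite (deg1_adj b lx exy) in eab; rewrite (eqP eab) set22.
  by rewrite (deg1_adj b ly eyx) in eab; rewrite (eqP eab) set21.
have : #|[set x; y]| <= 2 by rewrite cards2; case: (x != y).
apply: leq_trans; rewrite -cardsT; apply/subset_leq_card/subsetP => z _.
by rewrite -(closed_connect closed_xy (conn x z)) set21.
Qed.

Lemma mu1_le_bridges (T : finType) (e : rel T) :
  symmetric e -> irreflexive e -> (forall x y, connect e x y) -> 3 <= #|T| ->
  mu1 e <= #|edge_set (bridge e)|.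
Proof.
move=> se ie conn nT.
pose nb x := odflt x [pick y | e x y].
have e_nb x : deg e x == 1 -> e x (nb x).
  move=> /cards1P [y Nx]; have : y \in [set y | e x y] by rewrite Nx set11.
  by rewrite inE /nb => exy; case: pickP => // /(_ y); rewrite exy.
rewrite /mu1 -(card_in_imset (f := fun x => [set x; nb x])); last first.
  move=> x1 x2 /[!inE] l1 l2 /eq_set2 [[-> _] // | [x12 x21]].
  have := adjacent_leaves_card se conn l1 l2; rewrite -x21 e_nb // => /(_ isT) T2.
  by move: nT; rewrite leqNgt ltnS T2.
apply/subset_leq_card/subsetP => _ /imsetP [x /[!inE] lx ->].
apply/imsetP; exists (x, nb x) => //.
by rewrite inE /bridge /= e_nb // leaf_edge_not_on_cycle ?e_nb.
Qed.

Local Open Scope ring_scope.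

Lemma beta_le (T : finType) (e : rel T) (b : nat) :
  (mu1 e <= b)%N -> (mu1 e + muodd e <= 2 * b)%N -> beta e <= b%:R.
Proof.
move=> le1 le2; rewrite /beta ge_max ler_nat le1 /=.
by rewrite ler_pdivrMr // -natrM ler_nat mulnC.
Qed.

Lemma le_floor_four_thirds (m n b : nat) (x : rat) :
  x <= b%:R -> (3 * m + b <= 4 * n.-1)%N -> (0 < n)%N ->
  m%:Z <= Num.floor ((4 * (n%:R - 1) - x) / 3).
Proof.
move=> xb key n_gt0; rewrite floor_ge_int ler_pdivlMr // -[m%:Z%:~R]/(m%:R : rat).
move: key; rewrite -(ler_nat rat) natrD !natrM -subn1 natrB //.
by move: xb; lra.
Qed.

Theorem theorem4p13 (T : finType) (e : rel T) :
  bi_cactus e -> (4 <= #|T|)%N -> 1 <= beta e ->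
  ((num_edges e)%:Z <= Num.floor ((4 * (#|T|%:R - 1) - beta e) / 3 : rat))%R.
Proof.
move=> [[[se ie] conn ue] [col proper]] n4 _.
have /card_gt0P [r _] : (0 < #|T|)%N by apply: leq_trans n4.
have cycle_bound := bipartite_cactus_edge_bound r se proper ue conn.
have edges_split := card_edge_set_split proper se.
have leaves := mu1_le_bridges se ie conn (leq_trans (isT : 3 <= 4)%N n4).
have odd_vertices := card_odd_deg_le_bridges se proper ue.
rewrite -mu1_add_muodd in odd_vertices.
apply: le_floor_four_thirds (beta_le leaves odd_vertices) _ _; last exact: leq_trans n4.
rewrite num_edgesE; lia.
Qed.
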